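(* Let $G$ be a connected graph with girth $g(G)=4$ and let $(x,y)\in E(G)$ with $d_x=d_y=d$. Then $\kappa(x,y)=0$ if and only if there is a perfect matching between $N_G(x)$ and $N_G(y)$, i.e. a bijection $\sigma:N_G(x)\to N_G(y)$ with $(a,\sigma(a))\in E(G)$ for all $a\in N_G(x)$.
   Context: Graphs are locally finite and unweighted; the girth is the length of a shortest cycle. $d_G$ is the shortest-path metric, $N_G(v)$ the neighbour set and $d_v$ the degree of $v$; $m_v$ is the uniform probability measure on $N_G(v)$, and for an edge $(x,y)$, $\kappa(x,y)=1-W_1(m_x,m_y)$, where $W_1$ is the Wasserstein-1 (transportation) distance with respect to $d_G$. *)

From HB Require Import structures.
From mathcomp Require Import all_boot all_order all_algebra.
From mathcomp Require Import classical_sets reals.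
Set Implicit Arguments. Unset Strict Implicit. Unset Printing Implicit Defensive.
Import Order.TTheory GRing.Theory Num.Theory.
Local Open Scope classical_set_scope.
Local Open Scope ring_scope.

Record lfgraph (V : eqType) := LFGraph {
  nbr : V -> seq V;
  nbr_uniq : forall x, uniq (nbr x);
  nbr_sym : forall x y, (y \in nbr x) = (x \in nbr y);
  nbr_irrefl : forall x, x \notin nbr x
}.

Section Graphs.
Variables (V : eqType) (G : lfgraph V).

Definition adj : rel V := fun x y => y \in nbr G x.

Definition deg (v : V) : nat := size (nbr G v).

Definition connected : Prop :=
  forall u v : V, exists p : seq V, path adj u p && (last u p == v).

Definition is_cycle (c : seq V) : Prop := ucycle adj c /\ (3 <= size c)%N.

Definition girth_eq (k : nat) : Prop :=
  (exists c, is_cycle c /\ size c = k) /\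
  (forall c, is_cycle c -> (k <= size c)%N).

Variable R : realType.

Definition dist (u v : V) : R :=
  inf [set r : R | exists p : seq V,
        path adj u p /\ last u p = v /\ r = (size p)%:R].

Definition m (v a : V) : R :=
  if a \in nbr G v then (deg v)%:R^-1 else 0.

(* couplings of m_x and m_y; every coupling of two finitely supported
   probability measures is supported on supp m_x \times supp m_y,
   i.e. on N_G(x) \times N_G(y) *)
Definition is_coupling (x y : V) (pi : V -> V -> R) : Prop :=
  [/\ forall a b, 0 <= pi a b,
      forall a b, pi a b != 0 -> (a \in nbr G x) && (b \in nbr G y),
      forall a, \sum_(b <- nbr G y) pi a b = m x a
    & forall b, \sum_(a <- nbr G x) pi a b = m y b].

Definition transport_cost (x y : V) (pi : V -> V -> R) : R :=
  \sum_(a <- nbr G x) \sum_(b <- nbr G y) pi a b * dist a b.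

Definition W1 (x y : V) : R :=
  inf [set c : R | exists pi, is_coupling x y pi /\ c = transport_cost x y pi].

Definition kappa (x y : V) : R := 1 - W1 x y.

End Graphs.

(* Without triangles the neighbourhoods of [x] and [y] are disjoint, so every
   unit of mass moved from [N(x)] to [N(y)] travels at least 1, and at least 2
   between non-adjacent vertices: the cost of a coupling is at least 1 plus
   the mass it puts on non-edges.  Hence [W1 >= 1], with equality for the
   coupling [a |-> sigma a] of a perfect matching.  Conversely, if [W1 = 1]
   some coupling puts less than [1/d] on non-edges; then each [B] in [N(x)]
   sends its mass [|B|/d] to [N(B)] up to less than [1/d], which is Hall's
   condition, and Hall's theorem provides the matching. *)

From HB Require Import structures.
From mathcomp Require Import all_boot all_order all_algebra.
From mathcomp Require Import reals.
From mathcomp Require Import zify lra.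
Set Implicit Arguments. Unset Strict Implicit. Unset Printing Implicit Defensive.
Import Order.TTheory GRing.Theory Num.Theory.

Section Hall.
Variables (T S : finType) (s0 : S) (r : T -> S -> bool).
Implicit Types (A B D : {set T}) (C : {set S}) (f : T -> S).

Definition nbhd (C : {set S}) (B : {set T}) : {set S} :=
  [set b in C | [exists a in B, r a b]].

Definition is_matching (A : {set T}) (C : {set S}) (f : T -> S) : Prop :=
  {in A &, injective f} /\ {in A, forall a, (f a \in C) && r a (f a)}.

Definition hall_condition (A : {set T}) (C : {set S}) : Prop :=
  forall B : {set T}, B \subset A -> (#|B| <= #|nbhd C B|)%N.

Lemma nbhd_sub C B : nbhd C B \subset C.
Proof. by apply/subsetP=> b; rewrite inE => /andP[]. Qed.

Lemma nbhdU C B D :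
  nbhd C (D :|: B) \subset nbhd C B :|: nbhd (C :\: nbhd C B) D.
Proof.
apply/subsetP=> b; rewrite !inE => /andP[bC /existsP[a /andP[]]].
rewrite inE => /orP[aD | aB] rab; rewrite bC /=.
- case: [exists a0 in B, r a0 b] => //=.
  by apply/existsP; exists a; rewrite aD.
- by apply/orP; left; apply/existsP; exists a; rewrite aB.
Qed.

Lemma nbhdD1 C B b : nbhd C B :\ b \subset nbhd (C :\ b) B.
Proof. by apply/subsetP=> c; rewrite !inE => /andP[-> /andP[-> ->]]. Qed.

Lemma matching_subset A C C' f :
  C \subset C' -> is_matching A C f -> is_matching A C' f.
Proof.
move=> sCC' [f_inj f_in]; split=> // a aA.
by have /andP[/(subsetP sCC') -> ->] := f_in a aA.
Qed.

Lemma matching_nbhd A C f : is_matching A C f -> is_matching A (nbhd C A) f.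
Proof.
move=> [f_inj f_in]; split=> // a aA; have /andP[fC raf] := f_in a aA.
by rewrite inE fC raf andbT; apply/existsP; exists a; rewrite aA.
Qed.

Lemma matching_glue A1 A2 C1 C2 f1 f2 : [disjoint C1 & C2] ->
  is_matching A1 C1 f1 -> is_matching A2 C2 f2 ->
  is_matching (A1 :|: A2) (C1 :|: C2) (fun a => if a \in A1 then f1 a else f2 a).
Proof.
move=> dC [inj1 in1] [inj2 in2].
have inA2 a : a \in A1 :|: A2 -> a \notin A1 -> a \in A2.
  by rewrite inE => /orP[-> | ].
have cross u v : u \in A1 -> v \in A2 -> f1 u != f2 v.
  move=> uA vA; apply/eqP=> e; have /andP[uC _] := in1 u uA.
  have /andP[vC _] := in2 v vA.
  by move: dC; rewrite disjoints_subset => /subsetP/(_ _ uC); rewrite inE e vC.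
split=> [u v uA vA | a aA] /=.
- case: (boolP (u \in A1)) => u1; case: (boolP (v \in A1)) => v1.
  + exact: inj1.
  + by move=> e; have := cross u v u1 (inA2 v vA v1); rewrite e eqxx.
  + by move=> e; have := cross v u v1 (inA2 u uA u1); rewrite e eqxx.
  + exact: inj2 (inA2 u uA u1) (inA2 v vA v1).
- case: ifP => a1.
  + by have /andP[aC ->] := in1 a a1; rewrite inE aC.
  + by have /andP[aC ->] := in2 a (inA2 a aA (negbT a1)); rewrite inE aC orbT.
Qed.

Section HallStep.
Variables (A : {set T}) (C : {set S}).
Hypothesis hallAC : hall_condition A C.
Hypothesis IH : forall A' C', (#|A'| < #|A|)%N -> hall_condition A' C' ->
  exists f, is_matching A' C' f.

(* A tight proper subset [B] is matched onto its neighbourhood, and the rest of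
   [A] onto what remains of [C]; Hall's condition passes to both halves. *)
Lemma hall_step_tight B : B \proper A -> B != set0 ->
  (#|nbhd C B| <= #|B|)%N -> exists f, is_matching A C f.
Proof.
move=> pBA nB0 tightB; have sBA := proper_sub pBA.
have [f1 m1] : exists f, is_matching B (nbhd C B) f.
  have [f mf] := IH (proper_card pBA) (fun D sDB => hallAC (subset_trans sDB sBA)).
  by exists f; exact: matching_nbhd.
have [f2 m2] : exists f, is_matching (A :\: B) (C :\: nbhd C B) f.
  apply: IH => [|D sDAB].
    have := proper_card pBA; have := card_gt0 B; rewrite cardsD (setIidPr sBA) nB0; lia.
  have dDB : [disjoint D & B].
    by rewrite -setI_eq0 -subset0; apply/subsetP=> z;
      rewrite !inE => /andP[/(subsetP sDAB)]; rewrite inE => /andP[/negPf ->].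
  have sDBA : D :|: B \subset A by rewrite subUset sBA (subset_trans sDAB (subsetDl _ _)).
  have := hallAC sDBA; rewrite cardsU (disjoint_setI0 dDB) cards0 subn0.
  have := subset_leq_card (nbhdU C B D).
  have [+ _] := leq_card_setU (nbhd C B) (nbhd (C :\: nbhd C B) D).
  lia.
exists (fun a => if a \in B then f1 a else f2 a).
rewrite -(setID A B) (setIidPr sBA); apply: matching_subset (matching_glue _ m1 m2).
  by rewrite subUset nbhd_sub subsetDl.
by rewrite disjoints_subset setCD subsetUr.
Qed.

(* Otherwise any edge [ab] can be used, since removing [b] leaves Hall's
   condition intact on [A :\ a]. *)
Lemma hall_step_slack : A != set0 ->
  (forall B, B \proper A -> B != set0 -> (#|B| < #|nbhd C B|)%N) ->
  exists f, is_matching A C f.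
Proof.
move=> /set0Pn[a aA] slack.
have [b] : exists b, b \in nbhd C [set a].
  apply/set0Pn; rewrite -card_gt0.
  by have := hallAC (B := [set a]); rewrite cards1 sub1set; apply.
rewrite inE => /andP[bC /existsP[_ /andP[/set1P -> rab]]].
have [f mf] : exists f, is_matching (A :\ a) (C :\ b) f.
  apply: IH => [|D sD]; first by rewrite (cardsD1 a A) aA.
  have [->|nD0] := eqVneq D set0; first by rewrite cards0.
  have pDA : D \proper A.
    rewrite properEneq (subset_trans sD (subsetDl _ _)) andbT.
    by apply/eqP=> eDA; move: sD; rewrite eDA => /subsetP/(_ a aA); rewrite !inE eqxx.
  have := slack D pDA nD0; have := subset_leq_card (nbhdD1 C D b).
  by rewrite (cardsD1 b (nbhd C D)); case: (b \in nbhd C D); lia.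
have m1 : is_matching [set a] [set b] (fun=> b).
  by split=> [u v /set1P -> /set1P -> | z /set1P ->] //=; rewrite inE eqxx rab.
exists (fun z => if z \in [set a] then b else f z).
rewrite -(setD1K aA); apply: matching_subset (matching_glue _ m1 mf).
  by rewrite subUset sub1set bC subD1set.
by rewrite disjoints_subset sub1set !inE eqxx.
Qed.

End HallStep.

Lemma hall_matching A C : hall_condition A C -> exists f, is_matching A C f.
Proof.
have [n leAn] := ubnP #|A|; elim: n A leAn C => // n IHn A leAn C hallAC.
have IH A' C' : (#|A'| < #|A|)%N -> hall_condition A' C' -> exists f, is_matching A' C' f.
  by move=> ltA'; apply: IHn; lia.
have [->|nA0] := eqVneq A set0; first by exists (fun=> s0); split=> z; rewrite inE.
case: (boolP [exists B : {set T}, [&& B \proper A, B != set0 & #|nbhd C B| <= #|B|]]).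
  by case/existsP=> B /and3P[pBA nB0 tB]; exact: hall_step_tight tB.
move=> /existsPn noTight; apply: hall_step_slack => // B pBA nB0.
by have := noTight B; rewrite pBA nB0 /= -ltnNge.
Qed.

Lemma hall_injective : (forall B : {set T}, (#|B| <= #|nbhd setT B|)%N) ->
  exists f : T -> S, injective f /\ forall a, r a (f a).
Proof.
move=> hallT.
have [f [f_inj f_in]] := @hall_matching [set: T] [set: S] (fun B _ => hallT B).
exists f; split; first by move=> u v; apply: f_inj; rewrite inE.
by move=> a; have /andP[_ ->] := f_in a (in_setT a).
Qed.

End Hall.

Local Open Scope ring_scope.

(* The mass [c *+ #|B|] leaving the rows of [B] lands in the columns of
   [nbhd r setT B], each receiving at most [c], except for the mass off [r],
   which is less than [c]. *)
Lemma hall_of_plan (R : numFieldType) (T S : finType) (p : T -> S -> R)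
    (r : T -> S -> bool) c : 0 < c ->
  (forall i j, 0 <= p i j) -> (forall i, \sum_j p i j = c) ->
  (forall j, \sum_i p i j <= c) ->
  \sum_i \sum_j (if r i j then 0 else p i j) < c ->
  forall B : {set T}, (#|B| <= #|nbhd r setT B|)%N.
Proof.
move=> c_gt0 p_ge0 row col off B; set N := nbhd r setT B.
have sum_le (I : finType) (P : pred I) (F : I -> R) :
    (forall i, 0 <= F i) -> \sum_(i | P i) F i <= \sum_i F i.
  by move=> F_ge0; rewrite [leRHS](bigID P) /= lerDl sumr_ge0.
have off_ge0 i j : 0 <= (if r i j then 0 else p i j) by case: ifP.
have massB : c *+ #|B| = \sum_(i in B) \sum_(j in N) p i j
                         + \sum_(i in B) \sum_(j | j \notin N) p i j.
  rewrite -sumr_const -big_split; apply: eq_bigr => i _.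
  by rewrite -(row i) (bigID (mem N)).
have inN : \sum_(i in B) \sum_(j in N) p i j <= c *+ #|N|.
  rewrite exchange_big -sumr_const; apply: ler_sum => j _.
  by apply: le_trans (col j); apply: sum_le.
have outN : \sum_(i in B) \sum_(j | j \notin N) p i j < c.
  apply: le_lt_trans off; apply: le_trans (sum_le _ (mem B) _ _) => [|i]; last first.
    exact: sumr_ge0.
  apply: ler_sum => i iB; apply: le_trans (sum_le _ (fun j => j \notin N) _ (off_ge0 i)).
  apply: ler_sum => j jN.
  case: ifP => // rij; move: jN; rewrite !inE /=.
  by case/negP; apply/existsP; exists i; rewrite iB rij.
by rewrite -ltnS -(ltr_pMn2l c_gt0) mulrSr massB ler_ltD.
Qed.

Section Matchings.
Variable V : eqType.

Definition perfect_matching (r : rel V) (s t : seq V) (sigma : V -> V) : Prop :=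
  [/\ {in s &, injective sigma}, {in s, forall a, sigma a \in t},
      {in t, forall b, exists2 a, a \in s & sigma a = b}
    & {in s, forall a, r a (sigma a)}].

Lemma nth_ord_inj (x0 : V) (s : seq V) n (i j : 'I_n) :
  uniq s -> size s = n -> nth x0 s i = nth x0 s j -> i = j.
Proof.
move=> us sz e; have lt (k : 'I_n) : (k < size s)%N by rewrite sz.
by apply/val_inj/eqP; rewrite -(nth_uniq x0 (lt i) (lt j) us) e.
Qed.

Lemma perfect_matching_of_ord (r : rel V) (s t : seq V) x0 y0 n
    (f : 'I_n -> 'I_n) :
  uniq s -> uniq t -> size s = n -> size t = n -> injective f ->
  (forall i : 'I_n, r (nth x0 s i) (nth y0 t (f i))) ->
  exists sigma, perfect_matching r s t sigma.
Proof.
move=> us ut ss st f_inj rf.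
pose sigma a := if (insub (index a s) : option 'I_n) is Some i then nth y0 t (f i) else a.
have sigmaE a : a \in s ->
    exists i : 'I_n, nth x0 s i = a /\ sigma a = nth y0 t (f i).
  move=> sa; rewrite /sigma; case: insubP => [i _ ei | ].
    by exists i; rewrite ei nth_index.
  by rewrite -[n in (_ < n)%N]ss index_mem sa.
have s_nth (i : 'I_n) : nth x0 s i \in s by rewrite mem_nth ?ss.
exists sigma; split.
- move=> a b sa sb; have [i [<- ->]] := sigmaE a sa; have [j [<- ->]] := sigmaE b sb.
  by move/(nth_ord_inj ut st)/f_inj ->.
- by move=> a /sigmaE[i [_ ->]]; rewrite mem_nth ?st.
- move=> b tb; have [g fK gK] := injF_bij f_inj.
  have bt : (index b t < n)%N by rewrite -st index_mem.
  exists (nth x0 s (g (Ordinal bt))) => //.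
  have [i [/(nth_ord_inj us ss) -> ->]] := sigmaE _ (s_nth (g (Ordinal bt))).
  by rewrite gK nth_index.
- by move=> a /sigmaE[i [<- ->]].
Qed.

End Matchings.

Lemma big_seq_ord (T : Type) (M : nmodType) (s : seq T) z0 n (F : T -> M) :
  size s = n -> \sum_(a <- s) F a = \sum_(i < n) F (nth z0 s i).
Proof. by move=> <-; rewrite (big_nth z0) big_mkord. Qed.

Lemma sum_seq_pick (T : eqType) (M : nmodType) (s : seq T) z (k : M) :
  uniq s -> z \in s -> \sum_(b <- s) (if z == b then k else 0) = k.
Proof.
move=> us zs; rewrite (bigD1_seq z) //= eqxx big1 ?addr0 // => b.
by rewrite eq_sym => /negPf ->.
Qed.

Section Curvature.
Variables (R : realType) (V : eqType) (G : lfgraph V).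

Lemma adj_sym a b : adj G a b = adj G b a.
Proof. by rewrite /adj nbr_sym. Qed.

Lemma adj_neq a b : adj G a b -> a != b.
Proof. by apply: contraTneq => ->; rewrite /adj nbr_irrefl. Qed.

Lemma deg_gt0 a b : adj G a b -> (0 < deg G a)%N.
Proof. by rewrite /adj /deg; case: (nbr G a). Qed.

Lemma girth_triangle_free k a b c : girth_eq G k -> (3 < k)%N ->
  adj G a b -> adj G b c -> adj G c a -> False.
Proof.
move=> [_ girth_min] k_gt3 ab bc ca.
have triangle : is_cycle G [:: a; b; c].
  split=> //; rewrite /ucycle /= ab bc ca !inE !negb_or.
  by rewrite (adj_neq ab) (adj_neq bc) eq_sym (adj_neq ca).
by have := girth_min _ triangle; rewrite leqNgt k_gt3.
Qed.

Definition walk_between (a b : V) : Prop :=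
  exists p, path (adj G) a p /\ last a p = b.

Lemma dist_le_walk a p : path (adj G) a p -> dist G R a (last a p) <= (size p)%:R.
Proof.
move=> ap; apply: ge_inf; last by exists p.
by exists 0 => _ [q [_ [_ ->]]].
Qed.

Lemma dist_ge a b k : walk_between a b ->
  (forall p, path (adj G) a p -> last a p = b -> (k <= size p)%N) ->
  k%:R <= dist G R a b.
Proof.
move=> [p0 [ap0 lp0]] long; apply: lb_le_inf; first by exists (size p0)%:R, p0.
by move=> _ [p [ap [lp ->]]]; rewrite ler_nat long.
Qed.

Lemma dist_ge1 a b : a != b -> walk_between a b -> 1 <= dist G R a b.
Proof.
move=> ab w; apply: (@dist_ge _ _ 1) => // -[|c p] //= _ lp.
by move: ab; rewrite lp eqxx.
Qed.

Lemma dist_ge2 a b : a != b -> ~~ adj G a b -> walk_between a b ->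
  2 <= dist G R a b.
Proof.
move=> ab nab w; apply: (@dist_ge _ _ 2) => // -[|c [|e p]] //= => [_ lp | ].
  by move: ab; rewrite lp eqxx.
by rewrite andbT => ac ca; move: nab; rewrite -ca ac.
Qed.

Lemma dist_adj a b : adj G a b -> dist G R a b = 1.
Proof.
move=> ab; apply/le_anti; rewrite (dist_le_walk (p := [:: b])) /= ?ab //.
by rewrite dist_ge1 ?adj_neq //; exists [:: b]; rewrite /= ab.
Qed.

Lemma m_ge0 z a : 0 <= m G R z a.
Proof. by rewrite /m; case: ifP => // _; rewrite invr_ge0. Qed.

Lemma sum_inv_deg z : (0 < deg G z)%N -> \sum_(a <- nbr G z) (deg G z)%:R^-1 = 1 :> R.
Proof.
move=> dz; rewrite big_const_seq count_predT -/(deg G _) iter_addr_0.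
by rewrite -[LHS]mulr_natr mulVf // pnatr_eq0 -lt0n.
Qed.

Lemma sum_m z : (0 < deg G z)%N -> \sum_(b <- nbr G z) m G R z b = 1.
Proof.
by move=> dz; rewrite -(sum_inv_deg dz); apply: eq_big_seq => b zb; rewrite /m zb.
Qed.

Section Edge.
Variables x y : V.
Hypothesis triangle_free : forall a b c, adj G a b -> adj G b c -> adj G c a -> False.
Hypothesis xy : adj G x y.
Implicit Type pi : V -> V -> R.

Lemma walk_across a b : a \in nbr G x -> b \in nbr G y -> walk_between a b.
Proof.
move=> xa yb; exists [:: x; y; b]; split=> //=.
by rewrite xy /adj -nbr_sym xa yb.
Qed.

Lemma nbr_edge_neq a b : a \in nbr G x -> b \in nbr G y -> a != b.
Proof.
move=> xa yb; apply/eqP=> eab; move: xa; rewrite eab => xb.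
by apply: (triangle_free xy yb); rewrite adj_sym.
Qed.

Definition nonedge_mass (pi : V -> V -> R) : R :=
  \sum_(a <- nbr G x) \sum_(b <- nbr G y) (if adj G a b then 0 else pi a b).

Lemma nonedge_mass_ge0 pi : is_coupling G x y pi -> 0 <= nonedge_mass pi.
Proof.
by case=> pi_ge0 _ _ _; do 2!(apply: sumr_ge0 => ? _); case: ifP.
Qed.

(* Neighbours of [x] and of [y] are distinct, so each unit of mass costs at
   least 1, and at least 2 between non-adjacent vertices. *)
Lemma cost_ge_nonedge_mass pi : is_coupling G x y pi ->
  1 + nonedge_mass pi <= transport_cost G x y pi.
Proof.
move=> cpi; have [pi_ge0 _ row _] := cpi.
have mass : \sum_(a <- nbr G x) \sum_(b <- nbr G y) pi a b = 1.
  by rewrite (eq_bigr (m G R x)) ?sum_m ?(deg_gt0 xy).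
rewrite -mass /nonedge_mass /transport_cost -big_split /= big_seq [leRHS]big_seq.
apply: ler_sum => a xa; rewrite -big_split /= big_seq [leRHS]big_seq.
apply: ler_sum => b yb; have ab := nbr_edge_neq xa yb.
have := pi_ge0 a b; have := dist_ge1 ab (walk_across xa yb).
case: ifP => [_ | /negbT nab]; first by nra.
by have := dist_ge2 ab nab (walk_across xa yb); nra.
Qed.

Lemma cost_ge1 pi : is_coupling G x y pi -> 1 <= transport_cost G x y pi.
Proof.
move=> cpi; apply: le_trans (cost_ge_nonedge_mass cpi).
by rewrite lerDl nonedge_mass_ge0.
Qed.

Definition product_plan (a b : V) : R := m G R x a * m G R y b.

Lemma product_coupling : is_coupling G x y product_plan.
Proof.
have dx := deg_gt0 xy.
have dy : (0 < deg G y)%N by apply: (@deg_gt0 _ x); rewrite adj_sym.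
rewrite /product_plan; split=> [a b | a b | a | b]; first by rewrite mulr_ge0 ?m_ge0.
- by rewrite /m; do 2!case: ifP => _; rewrite ?mulr0 ?mul0r ?eqxx.
- by rewrite -big_distrr /= sum_m // mulr1.
- by rewrite -big_distrl /= sum_m // mul1r.
Qed.

Lemma W1_ge1 : 1 <= W1 G R x y.
Proof.
apply: lb_le_inf.
  by exists (transport_cost G x y product_plan), product_plan; split=> //;
    exact: product_coupling.
by move=> _ [pi [cpi ->]]; exact: cost_ge1.
Qed.

Lemma W1_le_cost pi : is_coupling G x y pi -> W1 G R x y <= transport_cost G x y pi.
Proof.
move=> cpi; apply: ge_inf; last by exists pi.
by exists 1 => _ [pi' [cpi' ->]]; exact: cost_ge1.
Qed.

Lemma near_optimal_coupling e : W1 G R x y = 1 -> 0 < e ->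
  exists2 pi, is_coupling G x y pi & nonedge_mass pi < e.
Proof.
move=> W1E e_gt0; have W1_lt : W1 G R x y < 1 + e by rewrite W1E ltrDl.
have [|_ [pi [cpi ->]] cost_lt] := inf_lt _ W1_lt.
  by exists (transport_cost G x y product_plan), product_plan; split=> //;
    exact: product_coupling.
by exists pi => //; have := cost_ge_nonedge_mass cpi; lra.
Qed.

Definition matching_plan (sigma : V -> V) (a b : V) : R :=
  if (a \in nbr G x) && (sigma a == b) then (deg G x)%:R^-1 else 0.

Section PerfectMatching.
Variable sigma : V -> V.
Hypothesis deg_xy : deg G x = deg G y.
Hypothesis sigma_pm : perfect_matching (adj G) (nbr G x) (nbr G y) sigma.

Lemma matching_plan_coupling : is_coupling G x y (matching_plan sigma).
Proof.
have [sigma_inj sigma_y sigma_onto _] := sigma_pm.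
rewrite /matching_plan; split=> [a b | a b | a | b].
- by case: ifP => // _; rewrite invr_ge0.
- by case: ifP => [/andP[xa /eqP <-] | ]; rewrite ?eqxx // xa sigma_y.
- rewrite /m; case: (boolP (a \in nbr G x)) => xa /=; last by rewrite big1.
  by rewrite sum_seq_pick ?nbr_uniq ?sigma_y.
- rewrite /m -deg_xy; case: (boolP (b \in nbr G y)) => yb.
    have [a0 xa0 <-] := sigma_onto b yb.
    rewrite -[RHS](sum_seq_pick _ (nbr_uniq G x) xa0); apply: eq_big_seq => a xa.
    rewrite xa /=; congr (if _ then _ else _); apply/eqP/eqP => [|-> //].
    by move=> e; rewrite (sigma_inj _ _ xa xa0 e).
  rewrite big1_seq // => a /andP[_ xa]; rewrite xa /=.
  by case: eqP => // sab; move: yb; rewrite -sab sigma_y.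
Qed.

Lemma matching_plan_cost : transport_cost G x y (matching_plan sigma) = 1.
Proof.
have [_ sigma_y _ sigma_adj] := sigma_pm.
rewrite /transport_cost /matching_plan -[RHS](sum_inv_deg (deg_gt0 xy)).
apply: eq_big_seq => a xa.
rewrite (eq_bigr (fun b => if sigma a == b then (deg G x)%:R^-1 else 0)).
  by rewrite sum_seq_pick ?nbr_uniq ?sigma_y.
move=> b _; rewrite xa /=; case: eqP => [<- | _]; last by rewrite mul0r.
by rewrite dist_adj ?mulr1 ?sigma_adj.
Qed.

End PerfectMatching.

Lemma perfect_matching_of_plan pi : deg G x = deg G y ->
  is_coupling G x y pi -> nonedge_mass pi < (deg G x)%:R^-1 ->
  exists sigma, perfect_matching (adj G) (nbr G x) (nbr G y) sigma.
Proof.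
move=> deg_xy [pi_ge0 _ row col] small; set n := deg G x.
have n_gt0 : (0 < n)%N := deg_gt0 xy.
have size_x : size (nbr G x) = n by [].
have size_y : size (nbr G y) = n := esym deg_xy.
pose a_ (i : 'I_n) := nth x (nbr G x) i; pose b_ (j : 'I_n) := nth y (nbr G y) j.
have x_nth i : a_ i \in nbr G x by rewrite mem_nth.
have y_nth j : b_ j \in nbr G y by rewrite mem_nth ?size_y.
have rows i : \sum_j pi (a_ i) (b_ j) = n%:R^-1.
  by have := row (a_ i); rewrite (big_seq_ord y _ size_y) /m x_nth.
have cols j : \sum_i pi (a_ i) (b_ j) <= n%:R^-1.
  by have := col (b_ j); rewrite (big_seq_ord x _ size_x) /m y_nth -deg_xy => ->.
have off : \sum_i \sum_j (if adj G (a_ i) (b_ j) then 0 else pi (a_ i) (b_ j)) < n%:R^-1.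
  move: small; rewrite /nonedge_mass (big_seq_ord x _ size_x).
  by under eq_bigr do rewrite (big_seq_ord y _ size_y).
have inv_gt0 : 0 < n%:R^-1 :> R by rewrite invr_gt0 ltr0n.
have plan_ge0 i j : 0 <= pi (a_ i) (b_ j) := pi_ge0 _ _.
have hall_cond := hall_of_plan inv_gt0 plan_ge0 rows cols off.
have [f [f_inj f_adj]] := hall_injective (Ordinal n_gt0) hall_cond.
exact: perfect_matching_of_ord (nbr_uniq G x) (nbr_uniq G y) size_x size_y f_inj f_adj.
Qed.

End Edge.
End Curvature.

Theorem corollary4p3 (R : realType) (V : eqType) (G : lfgraph V)
  (x y : V) (d : nat) :
  connected G -> girth_eq G 4 -> adj G x y ->
  deg G x = d -> deg G y = d ->
  (kappa G R x y = 0 <->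
   exists sigma : V -> V,
     [/\ {in nbr G x &, injective sigma},
         {in nbr G x, forall a, sigma a \in nbr G y},
         {in nbr G y, forall b, exists2 a, a \in nbr G x & sigma a = b}
       & {in nbr G x, forall a, adj G a (sigma a)}]).
Proof.
move=> _ girth4 xy deg_x deg_y.
have triangle_free := girth_triangle_free girth4 (isT : (3 < 4)%N).
have deg_xy : deg G x = deg G y by rewrite deg_x deg_y.
rewrite /kappa; split=> [/eqP | [sigma sigma_pm]]; last apply/eqP;
  rewrite subr_eq0 eq_sym.
  move=> /eqP W1E; have inv_gt0 : 0 < (deg G x)%:R^-1 :> R.
    by rewrite invr_gt0 ltr0n (deg_gt0 xy).
  have [pi cpi small] := near_optimal_coupling triangle_free xy W1E inv_gt0.
  have [sigma sigma_pm] := perfect_matching_of_plan xy deg_xy cpi small.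
  by exists sigma.
rewrite eq_le W1_ge1 // andbT -(matching_plan_cost R xy sigma_pm).
exact: (W1_le_cost triangle_free xy (matching_plan_coupling R deg_xy sigma_pm)).
Qed.
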